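(* Assume the bound condition (B) holds with constants $A,D>0$ and that $\max\{\Delta x,\Delta y\}\le 2D/A$. Suppose $f\equiv 0$. Then, for any time step $\Delta t=T/N_t$ (no restriction on $\Delta t$), any grid function $v$ satisfying the scheme (IFDS) satisfies $$\|v^{k}\|_\infty\le \|v^{0}\|_\infty\qquad\text{for all }k=1,\dots,N_t .$$
   Context: Fix $0<\alpha<1$, $T>0$ and a rectangle $\Omega=(x_L,x_R)\times(y_L,y_R)$. Let $a,b,c,d,f$ be real functions on $\overline\Omega\times[0,T]$ and $\psi$ a real function on $\overline\Omega$. Grid: for positive integers $N_x,N_y,N_t$ put $\Delta x=(x_R-x_L)/N_x$, $\Delta y=(y_R-y_L)/N_y$, $\Delta t=T/N_t$, $x_i=x_L+i\Delta x$, $y_j=y_L+j\Delta y$, $t_k=k\Delta t$, and for a function $g$ write $g_{i,j}^k=g(x_i,y_j,t_k)$. Let $\sigma_{\alpha,\Delta t}=\frac{1}{(\Delta t)^\alpha\Gamma(2-\alpha)}$ and $\omega_s=(s+1)^{1-\alpha}-s^{1-\alpha}$ for $s\ge0$. Scheme (IFDS): a grid function $(v_{i,j}^k)_{0\le i\le N_x,\,0\le j\le N_y,\,0\le k\le N_t}$ with $v_{i,j}^0=\psi(x_i,y_j)$, $v_{i,j}^k=0$ whenever $i\in\{0,N_x\}$ or $j\in\{0,N_y\}$ (for $k\ge1$), and for all $1\le i\le N_x-1$, $1\le j\le N_y-1$, $0\le k\le N_t-1$: $$\sigma_{\alpha,\Delta t}\sum_{s=0}^{k}\omega_s\big(v_{i,j}^{k-s+1}-v_{i,j}^{k-s}\big)+a_{i,j}^{k+1}\frac{v_{i+1,j}^{k+1}-v_{i-1,j}^{k+1}}{2\Delta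 x}+b_{i,j}^{k+1}\frac{v_{i,j+1}^{k+1}-v_{i,j-1}^{k+1}}{2\Delta y}$$ $$=c_{i,j}^{k+1}\frac{v_{i+1,j}^{k+1}-2v_{i,j}^{k+1}+v_{i-1,j}^{k+1}}{(\Delta x)^2}+d_{i,j}^{k+1}\frac{v_{i,j+1}^{k+1}-2v_{i,j}^{k+1}+v_{i,j-1}^{k+1}}{(\Delta y)^2}+f_{i,j}^{k+1}.$$ Norm: $\|v^k\|_\infty=\max_{1\le i\le N_x-1,\,1\le j\le N_y-1}|v_{i,j}^k|$. Bound condition (B): there are constants $A>0$, $D>0$ such that for all $(x,y,t)\in\overline\Omega\times[0,T]$: $0\le a(x,y,t)\le A$, $0\le b(x,y,t)\le A$, $c(x,y,t)\ge D$, $d(x,y,t)\ge D$. *)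

From Stdlib Require Import Reals Lra List Factorial.
Open Scope R_scope.

Fixpoint poch (z : R) (n : nat) : R :=
  match n with
  | O => z
  | S n' => poch z n' * (z + INR n)
  end.

(* Gauss/Euler product formula: Gamma z = lim_n n^z n! / (z (z+1) ... (z+n)), z > 0 *)
Definition gauss_seq (z : R) (n : nat) : R :=
  Rpower (INR n) z * INR (fact n) / poch z n.

(* s^(1-alpha) with the convention 0^(1-alpha) = 0 (Stdlib's Rpower 0 _ = 1) *)
Definition powa (alpha : R) (s : nat) : R :=
  match s with O => 0 | _ => Rpower (INR s) (1 - alpha) end.

Definition omega_w (alpha : R) (s : nat) : R := powa alpha (S s) - powa alpha s.

(* sigma_{alpha,dt} = 1 / (dt^alpha * Gamma(2-alpha)), with G = Gamma(2-alpha) *)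
Definition sigma_ad (alpha dt G : R) : R := 1 / (Rpower dt alpha * G).

Definition gridnorm (Nx Ny : nat) (v : nat -> nat -> nat -> R) (k : nat) : R :=
  fold_right Rmax 0
    (map (fun i => fold_right Rmax 0
                     (map (fun j => Rabs (v i j k)) (seq 1 (Ny - 1))))
         (seq 1 (Nx - 1))).

From Stdlib Require Import Reals Lra Lia List Factorial.
Open Scope R_scope.

(* Discrete maximum principle.  Let |v^{k+1}| attain its maximum M at an interior
   node.  Solving the scheme for v at that node writes
   (sigma + sum p) v = sigma * r + sum p * (neighbour values), where the neighbour
   weights p = c/h^2 -+ a/(2h) are nonnegative thanks to the mesh condition
   h <= 2D/A, and r = v^{k+1} - L1 sum is, by summation by parts, a convex
   combination of v^0, ..., v^k because the weights omega_s decrease from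
   omega_0 = 1.  Hence M <= max_{p <= k} ||v^p||, and induction on k concludes.
   That sigma > 0 rests on Gamma(2 - alpha) > 0, which follows from the Gauss
   product sequence being positive and increasing. *)

Lemma Rpower_pos x y : 0 < Rpower x y.
Proof. apply exp_pos. Qed.

Lemma Rpower_1_l y : Rpower 1 y = 1.
Proof. unfold Rpower. rewrite ln_1, Rmult_0_r. apply exp_0. Qed.

Lemma ln_le_sub_1 y : 0 < y -> ln y <= y - 1.
Proof. intros Hy. pose proof (exp_ineq1_le (ln y)) as H. rewrite exp_ln in H; lra. Qed.

Lemma Rpower_succ_ge x z : 0 < x -> 0 <= z ->
  Rpower x z * (z + (x + 1)) <= Rpower (x + 1) z * (x + 1).
Proof.
  intros Hx Hz.
  assert (Hlog : 1 / (x + 1) <= ln (x + 1) - ln x).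
  { pose proof (ln_le_sub_1 (x * / (x + 1))) as H.
    rewrite ln_mult, ln_Rinv in H by (try apply Rinv_0_lt_compat; lra).
    assert (x * / (x + 1) - 1 = - (1 / (x + 1))) by (field; lra).
    assert (0 < x * / (x + 1)) by (apply Rdiv_pos_pos; lra).
    lra. }
  assert (Hsplit : Rpower (x + 1) z = Rpower x z * exp (z * (ln (x + 1) - ln x))).
  { unfold Rpower. rewrite <- exp_plus. f_equal. ring. }
  assert (Hexp : 1 + z * (1 / (x + 1)) <= exp (z * (ln (x + 1) - ln x))).
  { eapply Rle_trans; [|apply exp_ineq1_le].
    apply Rplus_le_compat_l, Rmult_le_compat_l; lra. }
  replace (z + (x + 1)) with ((1 + z * (1 / (x + 1))) * (x + 1)) by (field; lra).
  rewrite Hsplit, <- Rmult_assoc.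
  apply Rmult_le_compat_r; [lra|].
  apply Rmult_le_compat_l; [left; apply Rpower_pos | exact Hexp].
Qed.

Lemma poch_pos z n : 0 < z -> 0 < poch z n.
Proof.
  intros Hz. induction n as [|n IH]; cbn [poch]; [exact Hz|].
  apply Rmult_lt_0_compat; [exact IH|]. pose proof (pos_INR (S n)); lra.
Qed.

Lemma gauss_seq_pos z n : 0 < z -> 0 < gauss_seq z n.
Proof.
  intros Hz. apply Rdiv_pos_pos; [|now apply poch_pos].
  apply Rmult_lt_0_compat; [apply Rpower_pos | apply lt_0_INR, lt_O_fact].
Qed.

Lemma gauss_seq_le_succ z n : 0 < z -> (1 <= n)%nat -> gauss_seq z n <= gauss_seq z (S n).
Proof.
  intros Hz Hn. unfold gauss_seq.
  change (fact (S n)) with (S n * fact n)%nat.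
  change (poch z (S n)) with (poch z n * (z + INR (S n))).
  rewrite mult_INR, S_INR.
  assert (Hx : 0 < INR n) by (apply lt_0_INR; lia).
  assert (HF : 0 < INR (fact n)) by apply lt_0_INR, lt_O_fact.
  pose proof (poch_pos z n Hz) as HP.
  pose proof (Rpower_succ_ge (INR n) z Hx (Rlt_le _ _ Hz)) as Hstep.
  replace (Rpower (INR n) z * INR (fact n) / poch z n)
    with (Rpower (INR n) z * (z + (INR n + 1)) * INR (fact n) / (poch z n * (z + (INR n + 1))))
    by (field; lra).
  replace (Rpower (INR n + 1) z * ((INR n + 1) * INR (fact n)) / (poch z n * (z + (INR n + 1))))
    with (Rpower (INR n + 1) z * (INR n + 1) * INR (fact n) / (poch z n * (z + (INR n + 1))))
    by (field; lra).
  apply Rmult_le_compat_r.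
  - left. apply Rinv_0_lt_compat, Rmult_lt_0_compat; lra.
  - apply Rmult_le_compat_r; lra.
Qed.

Lemma gauss_limit_pos z G : 0 < z -> Un_cv (gauss_seq z) G -> 0 < G.
Proof.
  intros Hz HG.
  assert (Hmono : forall m, (1 <= m)%nat -> gauss_seq z 1 <= gauss_seq z m).
  { induction m as [|m IH]; intros Hm; [lia|].
    destruct (Nat.eq_dec m 0) as [->|Hm0]; [lra|].
    eapply Rle_trans; [apply IH; lia | apply gauss_seq_le_succ; auto; lia]. }
  pose proof (gauss_seq_pos z 1 Hz) as H1.
  destruct (Rlt_le_dec G (gauss_seq z 1)) as [Hlt|Hle]; [|lra].
  destruct (HG (gauss_seq z 1 - G)) as [N HN]; [lra|].
  specialize (HN (S N) ltac:(lia)). specialize (Hmono (S N) ltac:(lia)).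
  unfold R_dist in HN. apply Rabs_def2 in HN. lra.
Qed.

Lemma Rpower_concave_incr x be : 0 < x -> 0 <= be <= 1 ->
  Rpower (x + 2) be - Rpower (x + 1) be <= Rpower (x + 1) be - Rpower x be.
Proof.
  intros Hx Hbe.
  set (f := fun t => Rpower t be).
  set (f' := fun t => be * Rpower t (be - 1)).
  assert (Hder : forall t, 0 < t -> derivable_pt_lim f t (f' t))
    by (intros t Ht; apply derivable_pt_lim_power; exact Ht).
  destruct (MVT_cor2 f f' x (x + 1)) as [c1 [E1 H1]];
    [lra | intros t Ht; apply Hder; lra |].
  destruct (MVT_cor2 f f' (x + 1) (x + 2)) as [c2 [E2 H2]];
    [lra | intros t Ht; apply Hder; lra |].
  unfold f, f' in E1, E2.
  replace (x + 1 - x) with 1 in E1 by ring.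
  replace (x + 2 - (x + 1)) with 1 in E2 by ring.
  assert (Hslope : Rpower c2 (be - 1) <= Rpower c1 (be - 1)).
  { assert (ln c1 < ln c2) by (apply ln_increasing; lra).
    assert (Hexp : (be - 1) * ln c2 <= (be - 1) * ln c1) by nra.
    unfold Rpower. destruct Hexp as [Hlt|Heq]; [left; apply exp_increasing | right; f_equal]; lra. }
  assert (be * Rpower c2 (be - 1) <= be * Rpower c1 (be - 1))
    by (apply Rmult_le_compat_l; lra).
  lra.
Qed.

Lemma omega_w_0 alpha : omega_w alpha 0 = 1.
Proof. unfold omega_w. simpl. rewrite Rpower_1_l. lra. Qed.

Lemma omega_w_nonneg alpha s : alpha <= 1 -> 0 <= omega_w alpha s.
Proof.
  intros Ha. unfold omega_w, powa. destruct s as [|s].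
  - simpl INR. rewrite Rpower_1_l. lra.
  - assert (Rpower (INR (S s)) (1 - alpha) <= Rpower (INR (S (S s))) (1 - alpha)); [|lra].
    apply Rle_Rpower_l; [lra|]. split; [apply lt_0_INR; lia | apply le_INR; lia].
Qed.

Lemma omega_w_succ_le alpha s : 0 <= alpha <= 1 -> omega_w alpha (S s) <= omega_w alpha s.
Proof.
  intros Ha. unfold omega_w. destruct s as [|s].
  - unfold powa. simpl INR. replace (1 + 1) with 2 by ring. rewrite Rpower_1_l.
    assert (Rpower 2 (1 - alpha) <= Rpower 2 1) by (apply Rle_Rpower; lra).
    rewrite Rpower_1 in * by lra. lra.
  - unfold powa. rewrite !S_INR.
    pose proof (Rpower_concave_incr (INR s + 1) (1 - alpha)) as H.
    replace (INR s + 1 + 1 + 1) with (INR s + 1 + 2) by ring.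
    apply H; [pose proof (pos_INR s); lra | lra].
Qed.

Definition L1_sum (w u : nat -> R) (k : nat) : R :=
  sum_f_R0 (fun s => w s * (u (k - s + 1)%nat - u (k - s)%nat)) k.

Section L1History.
Variable w : nat -> R.
Hypothesis w_0 : w 0%nat = 1.
Hypothesis w_succ_le : forall s, w (S s) <= w s.
Hypothesis w_nonneg : forall s, 0 <= w s.

(* Summation by parts: [u (S k) - L1_sum w u k] is the convex combination
   [w k * u 0 + \sum_{s=1}^{k} (w (s-1) - w s) * u (S k - s)]. *)
Lemma Rabs_L1_remainder_le k : forall (u : nat -> R) N,
  (forall p, (1 <= p <= k)%nat -> Rabs (u p) <= N) ->
  Rabs (u (S k) - L1_sum w u k - w k * u 0%nat) <= (1 - w k) * N.
Proof.
  unfold L1_sum. induction k as [|k IH]; intros u N Hu.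
  - simpl. rewrite w_0.
    replace (u 1%nat - 1 * (u 1%nat - u 0%nat) - 1 * u 0%nat) with 0 by ring.
    rewrite Rabs_R0. lra.
  - specialize (IH (fun p => u (S p)) N ltac:(intros p Hp; apply Hu; lia)).
    cbv beta in IH. rewrite tech5, Nat.sub_diag.
    rewrite (sum_eq _ (fun s => w s * (u (S (k - s + 1)) - u (S (k - s)))))
      by (intros s Hs; repeat f_equal; lia).
    set (Sk := sum_f_R0 _ k) in *.
    replace (u (S (S k)) - (Sk + w (S k) * (u (0 + 1)%nat - u 0%nat)) - w (S k) * u 0%nat)
      with ((u (S (S k)) - Sk - w k * u 1%nat) + (w k - w (S k)) * u 1%nat) by (simpl; ring).
    assert (Hgap : 0 <= w k - w (S k)) by (specialize (w_succ_le k); lra).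
    assert ((w k - w (S k)) * Rabs (u 1%nat) <= (w k - w (S k)) * N)
      by (apply Rmult_le_compat_l; [exact Hgap | apply Hu; lia]).
    eapply Rle_trans; [apply Rabs_triang|].
    rewrite Rabs_mult, (Rabs_pos_eq _ Hgap). lra.
Qed.

Lemma Rabs_sub_L1_sum_le k (u : nat -> R) N :
  (forall p, (p <= k)%nat -> Rabs (u p) <= N) -> Rabs (u (S k) - L1_sum w u k) <= N.
Proof.
  intros Hu.
  pose proof (Rabs_L1_remainder_le k u N ltac:(intros; apply Hu; lia)) as Hrem.
  assert (w k * Rabs (u 0%nat) <= w k * N)
    by (apply Rmult_le_compat_l; [apply w_nonneg | apply Hu; lia]).
  replace (u (S k) - L1_sum w u k)
    with ((u (S k) - L1_sum w u k - w k * u 0%nat) + w k * u 0%nat) by ring.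
  eapply Rle_trans; [apply Rabs_triang|].
  rewrite Rabs_mult, (Rabs_pos_eq (w k)) by apply w_nonneg. lra.
Qed.

End L1History.

Lemma fold_Rmax_nonneg {A} (f : A -> R) l : 0 <= fold_right Rmax 0 (map f l).
Proof. induction l; simpl; [lra | eapply Rle_trans; [apply IHl | apply Rmax_r]]. Qed.

Lemma fold_Rmax_ge {A} (f : A -> R) l x : In x l -> f x <= fold_right Rmax 0 (map f l).
Proof.
  induction l as [|y l IH]; simpl; intros Hx; [contradiction|].
  destruct Hx as [<-|Hx]; [apply Rmax_l | eapply Rle_trans; [apply IH, Hx | apply Rmax_r]].
Qed.

Lemma fold_Rmax_attained {A} (f : A -> R) l :
  fold_right Rmax 0 (map f l) = 0 \/ exists x, In x l /\ fold_right Rmax 0 (map f l) = f x.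
Proof.
  induction l as [|y l IH]; simpl; [auto|].
  unfold Rmax at 1 3. destruct Rle_dec.
  - destruct IH as [H|[x [Hx H]]]; [left | right; exists x]; auto.
  - right. exists y. auto.
Qed.

Lemma gridnorm_nonneg Nx Ny v k : 0 <= gridnorm Nx Ny v k.
Proof. apply fold_Rmax_nonneg. Qed.

Lemma Rabs_le_gridnorm Nx Ny v k i j : (1 <= i <= Nx - 1)%nat -> (1 <= j <= Ny - 1)%nat ->
  Rabs (v i j k) <= gridnorm Nx Ny v k.
Proof.
  intros Hi Hj. unfold gridnorm.
  eapply Rle_trans; [|apply (fold_Rmax_ge (fun i =>
    fold_right Rmax 0 (map (fun j => Rabs (v i j k)) (seq 1 (Ny - 1)))))].
  - apply (fold_Rmax_ge (fun j => Rabs (v i j k))). apply in_seq; lia.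
  - apply in_seq; lia.
Qed.

Lemma gridnorm_attained Nx Ny v k : gridnorm Nx Ny v k = 0 \/
  exists i j, (1 <= i <= Nx - 1)%nat /\ (1 <= j <= Ny - 1)%nat /\
              gridnorm Nx Ny v k = Rabs (v i j k).
Proof.
  unfold gridnorm.
  destruct (fold_Rmax_attained (fun i =>
    fold_right Rmax 0 (map (fun j => Rabs (v i j k)) (seq 1 (Ny - 1)))) (seq 1 (Nx - 1)))
    as [H|[i [Hi H]]]; [auto|].
  rewrite H. apply in_seq in Hi.
  destruct (fold_Rmax_attained (fun j => Rabs (v i j k)) (seq 1 (Ny - 1)))
    as [H'|[j [Hj H']]]; [auto|].
  apply in_seq in Hj. right. exists i, j. repeat split; auto; lia.
Qed.

Lemma Rabs_weighted_le p e M : 0 <= p -> Rabs e <= M -> Rabs (p * e) <= p * M.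
Proof. intros Hp He. rewrite Rabs_mult, Rabs_pos_eq by exact Hp. now apply Rmult_le_compat_l. Qed.

Lemma node_max_principle sg p1 p2 p3 p4 u r e1 e2 e3 e4 N M :
  0 < sg -> 0 <= p1 -> 0 <= p2 -> 0 <= p3 -> 0 <= p4 ->
  u * (sg + p1 + p2 + p3 + p4) = sg * r + p1 * e1 + p2 * e2 + p3 * e3 + p4 * e4 ->
  Rabs r <= N -> Rabs e1 <= M -> Rabs e2 <= M -> Rabs e3 <= M -> Rabs e4 <= M ->
  Rabs u = M -> M <= N.
Proof.
  intros Hsg H1 H2 H3 H4 Hbal Hr He1 He2 He3 He4 <-.
  assert (Hsum : Rabs u * (sg + p1 + p2 + p3 + p4)
                 <= sg * N + (p1 + p2 + p3 + p4) * Rabs u).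
  { rewrite <- (Rabs_pos_eq (sg + p1 + p2 + p3 + p4)) by lra.
    rewrite <- Rabs_mult, Hbal.
    pose proof (Rabs_weighted_le sg r N ltac:(lra) Hr).
    pose proof (Rabs_weighted_le p1 e1 (Rabs u) H1 He1).
    pose proof (Rabs_weighted_le p2 e2 (Rabs u) H2 He2).
    pose proof (Rabs_weighted_le p3 e3 (Rabs u) H3 He3).
    pose proof (Rabs_weighted_le p4 e4 (Rabs u) H4 He4).
    pose proof (Rabs_triang (sg * r + p1 * e1 + p2 * e2 + p3 * e3) (p4 * e4)).
    pose proof (Rabs_triang (sg * r + p1 * e1 + p2 * e2) (p3 * e3)).
    pose proof (Rabs_triang (sg * r + p1 * e1) (p2 * e2)).
    pose proof (Rabs_triang (sg * r) (p1 * e1)).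
    lra. }
  apply Rmult_le_reg_l with sg; lra.
Qed.

Lemma ifds_balance sg S a b c d dx dy u E W Nn Ss : 0 < dx -> 0 < dy ->
  sg * S + a * (E - W) / (2 * dx) + b * (Nn - Ss) / (2 * dy)
    = c * (E - 2 * u + W) / (dx * dx) + d * (Nn - 2 * u + Ss) / (dy * dy) ->
  u * (sg + (c / (dx * dx) - a / (2 * dx)) + (c / (dx * dx) + a / (2 * dx))
          + (d / (dy * dy) - b / (2 * dy)) + (d / (dy * dy) + b / (2 * dy)))
    = sg * (u - S) + (c / (dx * dx) - a / (2 * dx)) * E + (c / (dx * dx) + a / (2 * dx)) * W
      + (d / (dy * dy) - b / (2 * dy)) * Nn + (d / (dy * dy) + b / (2 * dy)) * Ss.
Proof.
  intros Hdx Hdy Hsch. apply Rminus_diag_uniq.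
  transitivity ((sg * S + a * (E - W) / (2 * dx) + b * (Nn - Ss) / (2 * dy))
    - (c * (E - 2 * u + W) / (dx * dx) + d * (Nn - 2 * u + Ss) / (dy * dy))).
  - field; lra.
  - lra.
Qed.

Lemma central_difference_coefs_nonneg h a c : 0 < h -> 0 <= a -> a * h <= 2 * c ->
  0 <= c / (h * h) - a / (2 * h) /\ 0 <= c / (h * h) + a / (2 * h).
Proof.
  intros Hh Ha Hac.
  replace (c / (h * h) - a / (2 * h)) with ((2 * c - a * h) / (2 * (h * h))) by (field; lra).
  replace (c / (h * h) + a / (2 * h)) with ((2 * c + a * h) / (2 * (h * h))) by (field; lra).
  assert (0 < 2 * (h * h)) by nra.
  split; apply Rle_mult_inv_pos; nra.
Qed.

Section IFDSStability.
Variables (Nx Ny Nt : nat) (sg dx dy : R) (w : nat -> R).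
Variables (a b c d v : nat -> nat -> nat -> R).
Hypothesis sg_pos : 0 < sg.
Hypothesis dx_pos : 0 < dx.
Hypothesis dy_pos : 0 < dy.
Hypothesis w_0 : w 0%nat = 1.
Hypothesis w_succ_le : forall s, w (S s) <= w s.
Hypothesis w_nonneg : forall s, 0 <= w s.
Hypothesis cell_peclet : forall i j k,
  (1 <= i <= Nx - 1)%nat -> (1 <= j <= Ny - 1)%nat -> (1 <= k <= Nt)%nat ->
  0 <= a i j k /\ a i j k * dx <= 2 * c i j k /\ 0 <= b i j k /\ b i j k * dy <= 2 * d i j k.
Hypothesis v_boundary : forall i j k, (i <= Nx)%nat -> (j <= Ny)%nat -> (1 <= k <= Nt)%nat ->
  (i = 0%nat \/ i = Nx \/ j = 0%nat \/ j = Ny) -> v i j k = 0.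
Hypothesis v_scheme : forall i j k,
  (1 <= i <= Nx - 1)%nat -> (1 <= j <= Ny - 1)%nat -> (k <= Nt - 1)%nat ->
  sg * L1_sum w (v i j) k
  + a i j (S k) * (v (S i) j (S k) - v (i - 1)%nat j (S k)) / (2 * dx)
  + b i j (S k) * (v i (S j) (S k) - v i (j - 1)%nat (S k)) / (2 * dy)
  = c i j (S k) * (v (S i) j (S k) - 2 * v i j (S k) + v (i - 1)%nat j (S k)) / (dx * dx)
  + d i j (S k) * (v i (S j) (S k) - 2 * v i j (S k) + v i (j - 1)%nat (S k)) / (dy * dy).

Lemma Rabs_le_gridnorm_closure i j k : (i <= Nx)%nat -> (j <= Ny)%nat -> (1 <= k <= Nt)%nat ->
  Rabs (v i j k) <= gridnorm Nx Ny v k.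
Proof.
  intros Hi Hj Hk.
  destruct (Nat.eq_dec i 0); [|destruct (Nat.eq_dec i Nx)];
    [| | destruct (Nat.eq_dec j 0); [|destruct (Nat.eq_dec j Ny)]];
    try (rewrite v_boundary, Rabs_R0 by (auto; lia); apply gridnorm_nonneg).
  apply Rabs_le_gridnorm; lia.
Qed.

Lemma gridnorm_succ_le m N0 : (S m <= Nt)%nat -> 0 <= N0 ->
  (forall p, (p <= m)%nat -> gridnorm Nx Ny v p <= N0) -> gridnorm Nx Ny v (S m) <= N0.
Proof.
  intros Hm HN0 Hpast.
  destruct (gridnorm_attained Nx Ny v (S m)) as [->|[i [j [Hi [Hj HM]]]]]; [exact HN0|].
  assert (Hnb : forall i' j', (i' <= Nx)%nat -> (j' <= Ny)%nat ->
            Rabs (v i' j' (S m)) <= gridnorm Nx Ny v (S m))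
    by (intros; apply Rabs_le_gridnorm_closure; lia).
  assert (Hhist : Rabs (v i j (S m) - L1_sum w (v i j) m) <= N0).
  { apply Rabs_sub_L1_sum_le; auto. intros p Hp.
    eapply Rle_trans; [apply Rabs_le_gridnorm; eauto | apply Hpast, Hp]. }
  destruct (cell_peclet i j (S m) Hi Hj ltac:(lia)) as [Ha [Hac [Hb Hbd]]].
  destruct (central_difference_coefs_nonneg dx _ _ dx_pos Ha Hac) as [Hx1 Hx2].
  destruct (central_difference_coefs_nonneg dy _ _ dy_pos Hb Hbd) as [Hy1 Hy2].
  eapply (node_max_principle sg); [exact sg_pos | exact Hx1 | exact Hx2 | exact Hy1 | exact Hy2
    | apply ifds_balance, v_scheme; auto; lia | exact Hhist | apply Hnb; lia .. | ].
  exact (eq_sym HM).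
Qed.

Lemma gridnorm_le_initial k : (k <= Nt)%nat -> gridnorm Nx Ny v k <= gridnorm Nx Ny v 0%nat.
Proof.
  assert (Hall : forall m, (m <= Nt)%nat -> forall p, (p <= m)%nat ->
            gridnorm Nx Ny v p <= gridnorm Nx Ny v 0%nat).
  { induction m as [|m IH]; intros Hm p Hp.
    - replace p with 0%nat by lia. lra.
    - destruct (Nat.eq_dec p (S m)) as [->|Hne]; [|apply IH; lia].
      apply gridnorm_succ_le; [exact Hm | apply gridnorm_nonneg | intros; apply IH; lia]. }
  intros Hk. exact (Hall k Hk k (le_n k)).
Qed.

End IFDSStability.

Lemma uniform_node_bounds len N i : 0 < len -> (0 < N)%nat -> (i <= N)%nat ->
  0 <= INR i * (len / INR N) <= len.
Proof.
  intros Hlen HN Hi.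
  assert (HN' : 0 < INR N) by (apply lt_0_INR; lia).
  assert (INR i <= INR N) by (apply le_INR; lia).
  assert (INR N * (len / INR N) = len) by (field; lra).
  assert (0 < len / INR N) by (apply Rdiv_pos_pos; lra).
  pose proof (pos_INR i). split; nra.
Qed.

Lemma cell_peclet_le a c h A D : 0 < A -> 0 <= a <= A -> D <= c -> 0 < h -> h <= 2 * D / A ->
  a * h <= 2 * c.
Proof.
  intros HA Ha Hc Hh HhD.
  assert (a * h <= A * h) by (apply Rmult_le_compat_r; lra).
  assert (A * h <= A * (2 * D / A)) by (apply Rmult_le_compat_l; lra).
  assert (A * (2 * D / A) = 2 * D) by (field; lra).
  lra.
Qed.

Theorem mainTheorem1
  (alpha T xL xR yL yR : R) (a b c d f : R -> R -> R -> R) (psi : R -> R -> R)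
  (Nx Ny Nt : nat) (A D G : R) (v : nat -> nat -> nat -> R) :
  0 < alpha < 1 -> 0 < T -> xL < xR -> yL < yR ->
  (0 < Nx)%nat -> (0 < Ny)%nat -> (0 < Nt)%nat ->
  (* G = Gamma(2 - alpha), via the Gauss product formula *)
  Un_cv (gauss_seq (2 - alpha)) G ->
  (* bound condition (B) *)
  0 < A -> 0 < D ->
  (forall x y t, xL <= x <= xR -> yL <= y <= yR -> 0 <= t <= T ->
     0 <= a x y t <= A /\ 0 <= b x y t <= A /\ D <= c x y t /\ D <= d x y t) ->
  let dx := (xR - xL) / INR Nx in
  let dy := (yR - yL) / INR Ny in
  let dt := T / INR Nt in
  Rmax dx dy <= 2 * D / A ->
  (* f == 0 *)
  (forall x y t, xL <= x <= xR -> yL <= y <= yR -> 0 <= t <= T -> f x y t = 0) ->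
  let X := fun i : nat => xL + INR i * dx in
  let Y := fun j : nat => yL + INR j * dy in
  let tt := fun k : nat => INR k * dt in
  (* initial condition *)
  (forall i j, (i <= Nx)%nat -> (j <= Ny)%nat -> v i j 0%nat = psi (X i) (Y j)) ->
  (* homogeneous Dirichlet boundary condition for k >= 1 *)
  (forall i j k, (i <= Nx)%nat -> (j <= Ny)%nat -> (1 <= k <= Nt)%nat ->
     (i = 0%nat \/ i = Nx \/ j = 0%nat \/ j = Ny) -> v i j k = 0) ->
  (* the scheme (IFDS) *)
  (forall i j k, (1 <= i <= Nx - 1)%nat -> (1 <= j <= Ny - 1)%nat -> (k <= Nt - 1)%nat ->
     sigma_ad alpha dt G *
       sum_f_R0 (fun s => omega_w alpha s * (v i j (k - s + 1)%nat - v i j (k - s)%nat)) k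
     + a (X i) (Y j) (tt (S k)) * (v (S i) j (S k) - v (i - 1)%nat j (S k)) / (2 * dx)
     + b (X i) (Y j) (tt (S k)) * (v i (S j) (S k) - v i (j - 1)%nat (S k)) / (2 * dy)
     = c (X i) (Y j) (tt (S k)) *
         (v (S i) j (S k) - 2 * v i j (S k) + v (i - 1)%nat j (S k)) / (dx * dx)
     + d (X i) (Y j) (tt (S k)) *
         (v i (S j) (S k) - 2 * v i j (S k) + v i (j - 1)%nat (S k)) / (dy * dy)
     + f (X i) (Y j) (tt (S k))) ->
  forall k, (1 <= k <= Nt)%nat -> gridnorm Nx Ny v k <= gridnorm Nx Ny v 0%nat.
Proof.
  intros Hal HT Hx Hy HNx HNy HNt HG HA HD HB dx dy dt Hmesh Hf X Y tt _ Hbd Hsch k Hk.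
  assert (Hnode : forall i j k, (i <= Nx)%nat -> (j <= Ny)%nat -> (k <= Nt)%nat ->
            xL <= X i <= xR /\ yL <= Y j <= yR /\ 0 <= tt k <= T).
  { intros i j k' Hi Hj Hk'.
    pose proof (uniform_node_bounds (xR - xL) Nx i ltac:(lra) HNx Hi).
    pose proof (uniform_node_bounds (yR - yL) Ny j ltac:(lra) HNy Hj).
    pose proof (uniform_node_bounds T Nt k' HT HNt Hk').
    unfold X, Y, tt, dx, dy, dt. repeat split; lra. }
  assert (Hdx : 0 < dx) by (apply Rdiv_pos_pos; [lra | apply lt_0_INR; lia]).
  assert (Hdy : 0 < dy) by (apply Rdiv_pos_pos; [lra | apply lt_0_INR; lia]).
  pose proof (Rmax_l dx dy). pose proof (Rmax_r dx dy).
  assert (Hsg : 0 < sigma_ad alpha dt G).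
  { apply Rdiv_pos_pos, Rmult_lt_0_compat; [lra | apply Rpower_pos |].
    apply (gauss_limit_pos (2 - alpha)); [lra | exact HG]. }
  apply (gridnorm_le_initial Nx Ny Nt _ dx dy (omega_w alpha)
           (fun i j k => a (X i) (Y j) (tt k)) (fun i j k => b (X i) (Y j) (tt k))
           (fun i j k => c (X i) (Y j) (tt k)) (fun i j k => d (X i) (Y j) (tt k)) v Hsg Hdx Hdy);
    [apply omega_w_0 | intros; apply omega_w_succ_le; lra | intros; apply omega_w_nonneg; lra
    | | exact Hbd | | lia].
  - intros i j k' Hi Hj Hk'.
    destruct (Hnode i j k' ltac:(lia) ltac:(lia) ltac:(lia)) as [HXi [HYj Htk]].
    destruct (HB _ _ _ HXi HYj Htk) as [Ha [Hb [Hc Hd]]].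
    repeat split; try lra; apply (cell_peclet_le _ _ _ A D); lra.
  - intros i j k' Hi Hj Hk'.
    destruct (Hnode i j (S k') ltac:(lia) ltac:(lia) ltac:(lia)) as [HXi [HYj Htk]].
    pose proof (Hsch i j k' Hi Hj Hk') as Hs.
    rewrite (Hf _ _ _ HXi HYj Htk), Rplus_0_r in Hs. exact Hs.
Qed.
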